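(* Let $p$ be a prime number and let $c,r$ be positive integers. Let $G$ be a finite $p$-group of nilpotency class $c$ and rank $r$. Then there exists a series of subgroups \[G=G_0\supseteq G_1\supseteq \dots\supseteq G_h=\{1\}\] such that: (a) each $G_i$ is normal in $G$ and each $G_i/G_{i+1}$ is a cyclic $p$-group; (b) if $G/G_{i+1}$ has nilpotency class $l$, then $G_i\leq \gamma_l(G)$, and in particular $G_i/G_{i+1}$ is central in $G/G_{i+1}$; (c) $h=h(c,r)\leq cr$ is a number depending only on $c$ and $r$.
   Context: The rank of a finite $p$-group $G$ is its sectional rank $\operatorname{rk}(G)=\max\{d(H)\mid H\leq G\}$, where $d(H)$ is the minimal number of generators of $H$. $\{\gamma_i(G)\}_{i\geq1}$ denotes the lower central series, $\gamma_1(G)=G$, $\gamma_{i+1}(G)=[\gamma_i(G),G]$. *)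

From mathcomp Require Import all_boot all_fingroup all_solvable.
Set Implicit Arguments.
Unset Strict Implicit.
Unset Printing Implicit Defensive.
Local Open Scope group_scope.

(* d(H): minimal number of generators of H, i.e. the least #|X| with <<X>> = H.
   H itself generates H, so #|H| is a valid default/upper bound. *)
Definition min_gen (gT : finGroupType) (H : {set gT}) : nat :=
  \big[minn/#|H|]_(X : {set gT} | <<X>> == H) #|X|.

Definition sec_rank (gT : finGroupType) (G : {set gT}) : nat :=
  \max_(H : {group gT} | H \subset G) min_gen H.

From mathcomp Require Import all_boot all_fingroup all_solvable.
Local Open Scope group_scope.
Set Implicit Arguments.
Unset Strict Implicit.
Unset Printing Implicit Defensive.

(* Refine the lower central series.  Since [~: 'L_j.+1(G), G] = 'L_j.+2(G),
   every subgroup between 'L_j.+2(G) and 'L_j.+1(G) is normal in G, and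
   adjoining to 'L_j.+2(G) the generators of 'L_j.+1(G) one at a time gives
   cyclic factors central in G.  As 'L_j.+1(G) has at most r generators, each
   of the c layers takes r steps (some trivial).  A term G_i of layer j lies in
   'L_j.+1(G), while G/G_(i+1) has class at most j+1 since 'L_j.+2(G) <= G_(i+1). *)

Section Generators.

Variable gT : finGroupType.
Implicit Types G H : {group gT}.

Lemma min_genP H : exists2 X : {set gT}, <<X>> = H & #|X| = min_gen H.
Proof.
rewrite /min_gen; elim/big_ind: _ => [|a b [X genX <-] [Y genY <-]|X /eqP genX].
- by exists H; rewrite ?genGid.
- by case: leqP => _; [exists X | exists Y].
- by exists X.
Qed.

Lemma sec_rank_gen G H :
  H \subset G -> exists2 X : {set gT}, <<X>> = H & #|X| <= sec_rank G.
Proof.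
move=> sHG; have [X genX cardX] := min_genP H; exists X => //.
by rewrite cardX; apply: (leq_bigmax_cond (P := fun K : {group gT} => K \subset G)).
Qed.

Lemma sec_rank_gen_family G (Hs : nat -> {group gT}) :
    (forall j, Hs j \subset G) ->
  exists X : nat -> {set gT}, forall j, <<X j>> = Hs j /\ #|X j| <= sec_rank G.
Proof.
move=> sHsG.
exists (fun j => odflt set0 [pick X | (<<X>> == Hs j) && (#|X| <= sec_rank G)]).
move=> j; case: pickP => [X /andP[/eqP genX cardX] | noX] //=.
have [X genX cardX] := sec_rank_gen (sHsG j).
by have := noX X; rewrite genX eqxx cardX.
Qed.

End Generators.

Section Adjoin.

Variable gT : finGroupType.
Implicit Types (A : {group gT}) (x : gT) (s : seq gT).

Definition adjoin (A : {set gT}) s : {group gT} := <<A :|: [set x in s]>>%G.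

Lemma adjoin_nil A : adjoin A [::] = A.
Proof.
apply: val_inj; rewrite /= -[RHS]genGid.
by congr <<_>>; apply/setP => x; rewrite !inE orbF.
Qed.

Lemma adjoin_enum_gen A (B : {group gT}) (X : {set gT}) :
  <<X>> = B -> A \subset B -> adjoin A (enum X) = B.
Proof.
move=> genX sAB; apply: val_inj; rewrite /= set_enum -genX.
apply/eqP; rewrite eqEsubset (genS (subsetUr A X)) andbT gen_subG subUset.
by rewrite subset_gen andbT /= genX.
Qed.

Lemma sub_adjoin A s : A \subset adjoin A s.
Proof. exact: subset_trans (subsetUl _ _) (subset_gen _). Qed.

Lemma adjoin_subS A x s : adjoin A s \subset adjoin A (x :: s).
Proof.
by apply/genS/setUS/subsetP => y; rewrite !inE => ->; rewrite orbT.
Qed.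

Lemma adjoin_cons_cyclic A x s :
  x \in 'N(adjoin A s) -> cyclic (adjoin A (x :: s) / adjoin A s).
Proof.
move=> Nx; have nsx : <[x]> \subset 'N(adjoin A s) by rewrite cycle_subG.
apply: (@cyclicS _ ((adjoin A s <*> <[x]>) / adjoin A s)%G).
  rewrite quotientS // gen_subG subUset.
  rewrite (subset_trans (sub_adjoin A s)) ?joing_subl //=.
  apply/subsetP => y; rewrite !inE => /orP[/eqP-> | ys].
    exact: subsetP (joing_subr _ _) _ (cycle_id x).
  by apply: subsetP (joing_subl _ _) _ _; apply: mem_gen; rewrite !inE ys orbT.
by rewrite /= quotientYidl // quotient_cyclic // cycle_cyclic.
Qed.

Variables G A B : {group gT}.
Hypotheses (sBG : B \subset G) (sAB : A \subset B) (cBG : [~: B, G] \subset A).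

Lemma adjoin_sub s : {subset s <= B} -> adjoin A s \subset B.
Proof.
move=> sB; rewrite gen_subG subUset sAB.
by apply/subsetP => y; rewrite inE => /sB.
Qed.

Lemma adjoin_normal s : {subset s <= B} -> adjoin A s <| G.
Proof.
move=> sB; have sHB := adjoin_sub sB.
rewrite /normal (subset_trans sHB sBG) -commg_subl.
exact: subset_trans (commSg _ sHB) (subset_trans cBG (sub_adjoin A s)).
Qed.

Lemma adjoin_cons_central x s :
  {subset x :: s <= B} -> adjoin A (x :: s) / adjoin A s \subset 'Z(G / adjoin A s).
Proof.
move=> sB; have sHB := adjoin_sub sB.
rewrite subsetI quotientS ?(subset_trans sHB sBG) //= quotient_cents2r //.
exact: subset_trans (commSg _ sHB) (subset_trans cBG (sub_adjoin A s)).
Qed.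

Lemma adjoin_behead_factor t : {subset t <= B} ->
  let H := adjoin A t in let K := adjoin A (behead t) in
  [/\ K \subset H, H <| G, cyclic (H / K) & H / K \subset 'Z(G / K)].
Proof.
move=> sB H K; have nHG := adjoin_normal sB.
case: t sB @H @K nHG => [|x t] sB H K nHG.
  by rewrite /H /K trivg_quotient cyclic1 sub1G.
have sBt : {subset t <= B} by move=> y yt; apply: sB; rewrite inE yt orbT.
have xG : x \in G by apply/(subsetP sBG)/sB; rewrite inE eqxx.
split=> //; [exact: adjoin_subS | | exact: adjoin_cons_central].
by apply: adjoin_cons_cyclic; apply: subsetP (normal_norm (adjoin_normal sBt)) _ xG.
Qed.

End Adjoin.

Lemma nil_class_quotient_lcn (gT : finGroupType) (G H : {group gT}) j :
  nilpotent G -> H <| G -> 'L_j.+1(G) \subset H -> nil_class (G / H) <= j.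
Proof.
move=> nilG nHG sLH; apply/(lcn_nil_classP j (quotient_nil H nilG)).
by rewrite /= -morphim_lcn ?normal_norm //; apply: quotientS1.
Qed.

Lemma lcn_adjoin_factor (gT : finGroupType) (p j : nat) (G : {group gT}) t :
    p.-group G -> {subset t <= 'L_j.+1(G)} ->
  let H := adjoin 'L_j.+2(G) t in let K := adjoin 'L_j.+2(G) (behead t) in
  [/\ K \subset H, H <| G, cyclic (H / K), p.-group (H / K) &
    (forall l, nil_class (G / K) = l -> H \subset 'L_l(G)) /\
    H / K \subset 'Z(G / K)].
Proof.
move=> pG sLt H K.
have sLG : 'L_j.+1(G) \subset G := lcn_sub _ _.
have cLG : [~: 'L_j.+1(G), G] \subset 'L_j.+2(G) by rewrite lcnSn.
have [sKH nHG cycHK zHK] := adjoin_behead_factor sLG (lcn_subS _ _) cLG sLt.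
have nKG : K <| G by apply: (adjoin_normal sLG (lcn_subS _ _) cLG) => y /mem_behead/sLt.
split=> //; first exact: quotient_pgroup (pgroupS (normal_sub nHG) pG).
split=> // l <-; apply: subset_trans (adjoin_sub (lcn_subS _ _) sLt) _.
apply/lcn_sub_leq/nil_class_quotient_lcn => //; first exact: pgroup_nil pG.
exact: sub_adjoin.
Qed.

Lemma divn_modn_glue (T : Type) (F : nat -> nat -> T) r :
    0 < r -> (forall j, F j r = F j.+1 0) ->
  forall i, F (i.+1 %/ r) (i.+1 %% r) = F (i %/ r) (i %% r).+1.
Proof.
move=> r_gt0 glue i; rewrite {1 2}(divn_eq i r) -addnS.
have := ltn_pmod i r_gt0; rewrite leq_eqVlt => /orP[/eqP lastr | ltr].
  by rewrite lastr -mulSnr mulnK // modnMl glue.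
by rewrite divnMDl // modnMDl (divn_small ltr) addn0 (modn_small ltr).
Qed.

Theorem lemma3p1 :
  exists h : nat -> nat -> nat,
    (forall c r : nat, (0 < c)%N -> (0 < r)%N -> (h c r <= c * r)%N) /\
    forall (p c r : nat) (gT : finGroupType) (G : {group gT}),
      prime p -> (0 < c)%N -> (0 < r)%N ->
      p.-group G -> nil_class G = c -> sec_rank G = r ->
      exists Gs : nat -> {group gT},
        [/\ Gs 0%N = G, Gs (h c r) = 1%G :> {group gT} &
          forall i : nat, (i < h c r)%N ->
            [/\ Gs i.+1 \subset Gs i,
                Gs i <| G,
                cyclic (Gs i / Gs i.+1),
                p.-group (Gs i / Gs i.+1) &
                (forall l : nat, nil_class (G / Gs i.+1) = l -> Gs i \subset 'L_l(G)) /\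
                (Gs i / Gs i.+1 \subset 'Z(G / Gs i.+1))]].
Proof.
exists (fun c r => (c * r)%N); split=> // p c r gT G _ _ r_gt0 pG classG rankG.
have [X genX] := sec_rank_gen_family (fun j => lcn_sub j.+1 G).
pose layer j k := adjoin 'L_j.+2(G) (drop k (enum (X j))).
have layer0 j : layer j 0 = 'L_j.+1(G)%G.
  by rewrite /layer drop0 (adjoin_enum_gen (proj1 (genX j))) ?lcn_subS.
have glue j : layer j r = layer j.+1 0.
  rewrite layer0 /layer drop_oversize ?adjoin_nil //.
  by rewrite -cardE -rankG; case: (genX j).
exists (fun i => layer (i %/ r) (i %% r)); split.
- by rewrite div0n mod0n layer0; apply: val_inj; rewrite /= lcn1.
- rewrite mulnK // modnMl layer0; apply: val_inj => /=.
  by apply/(lcn_nil_classP c (pgroup_nil pG)); rewrite classG.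
have dropS k (s : seq gT) : drop k.+1 s = behead (drop k s).
  by rewrite -drop1 drop_drop add1n.
move=> i _; rewrite (divn_modn_glue r_gt0 glue) /layer dropS.
apply: lcn_adjoin_factor pG _ => y /mem_drop.
by case: (genX (i %/ r)) => <- _ yX; apply: mem_gen; rewrite -mem_enum.
Qed.
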